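(* Let $\Gamma$ be a distance-regular graph with diameter $D\ge 3$, and let $\sigma_0,\dots,\sigma_D$ and $\rho_0,\dots,\rho_D$ be pseudo cosine sequences of $\Gamma$, with $\sigma=\sigma_1$, $\rho=\rho_1$. Then $$(\sigma-\rho)\sum_{h=0}^{i}k_h\sigma_h\rho_h=\frac{b_1b_2\cdots b_i}{c_1c_2\cdots c_i}\,(\sigma_{i+1}\rho_i-\sigma_i\rho_{i+1})\qquad(0\le i\le D-1).$$
   Context: $\Gamma$ is a finite connected undirected graph without loops or multiple edges, distance-regular with diameter $D$, intersection numbers $a_i,b_i,c_i$ ($c_0=0$, $b_D=0$), valency $k=b_0$, $c_i+a_i+b_i=k$, and $k_h=\frac{b_0b_1\cdots b_{h-1}}{c_1c_2\cdots c_h}$ (the number of vertices at distance $h$ from a given vertex). For $\theta\in\mathbb{R}$ the pseudo cosine sequence for $\theta$ is the sequence of reals $\sigma_0,\dots,\sigma_D$ with $\sigma_0=1$ and $c_i\sigma_{i-1}+a_i\sigma_i+b_i\sigma_{i+1}=\theta\sigma_i$ for $0\le i\le D-1$; then $\theta=k\sigma_1$. *)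

From mathcomp Require Import all_boot all_order all_algebra.
Set Implicit Arguments. Unset Strict Implicit. Unset Printing Implicit Defensive.
Import Order.TTheory GRing.Theory Num.Theory.

Definition simple_graph (T : finType) (e : rel T) : Prop :=
  symmetric e /\ irreflexive e.

Fixpoint ball (T : finType) (e : rel T) (n : nat) (x : T) : {set T} :=
  match n with
  | 0 => [set x]
  | n'.+1 => ball e n' x :|: [set z | [exists y in ball e n' x, e y z]]
  end.

(* Path distance: least n with y in ball n x (meaningful when the graph is
   connected, since then n < #|T|). *)
Definition dist (T : finType) (e : rel T) (x y : T) : nat :=
  find (fun n => y \in ball e n x) (iota 0 #|T|).

Definition distance_regular (T : finType) (e : rel T) (D : nat)
    (a b c : nat -> nat) : Prop :=
  [/\ simple_graph e,
      (forall x y, connect e x y),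
      (forall x y, dist e x y <= D),
      (exists x y, dist e x y = D) &
      (forall x y, let i := dist e x y in
         [/\ c i = #|[set z | e y z & (i > 0) && (dist e x z == i.-1)]|,
             a i = #|[set z | e y z & dist e x z == i]| &
             b i = #|[set z | e y z & dist e x z == i.+1]| ])].

Local Open Scope ring_scope.

Definition kh (R : realFieldType) (b c : nat -> nat) (h : nat) : R :=
  (\prod_(0 <= j < h) (b j)%:R) / (\prod_(1 <= j < h.+1) (c j)%:R).

(* sigma is a pseudo cosine sequence for theta: sigma_0 = 1 and
   c_i sigma_{i-1} + a_i sigma_i + b_i sigma_{i+1} = theta sigma_i for
   0 <= i <= D-1 (the term c_0 sigma_{-1} vanishes as c_0 = 0). *)
Definition pseudo_cosine_seq (R : realFieldType) (D : nat) (a b c : nat -> nat)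
    (theta : R) (sigma : nat -> R) : Prop :=
  sigma 0%N = 1 /\
  forall i : nat, (i < D)%N ->
    (c i)%:R * sigma i.-1 + (a i)%:R * sigma i + (b i)%:R * sigma i.+1
      = theta * sigma i.

Definition is_pseudo_cosine_seq (R : realFieldType) (D : nat)
    (a b c : nat -> nat) (sigma : nat -> R) : Prop :=
  exists theta : R, pseudo_cosine_seq D a b c theta sigma.

From mathcomp Require Import all_boot all_order all_algebra.
From mathcomp Require Import ring.
Import Order.TTheory GRing.Theory Num.Theory.
Set Implicit Arguments. Unset Strict Implicit.

(* Subtracting the two three-term recurrences multiplied crosswise shows that
   the Casoratian W_i = sigma_{i+1} rho_i - sigma_i rho_{i+1} satisfies
   b_i W_i = c_i W_{i-1} + (theta - theta') sigma_i rho_i, while at i = 0 the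
   recurrences give theta - theta' = b_0 (sigma - rho), the c_0 and a_0 terms
   cancelling because sigma_0 = rho_0 = 1.  Dividing by c_1 ... c_i, which is
   legitimate because c_i > 0 in a distance-regular graph, the identity
   telescopes into the sum of the k_h sigma_h rho_h. *)

Section Distance.
Variables (T : finType) (e : rel T).

Lemma ball_step n x z y : z \in ball e n x -> e z y -> y \in ball e n.+1 x.
Proof.
move=> zb ezy /=; rewrite in_setU inE; apply/orP; right.
by apply/existsP; exists z; rewrite zb.
Qed.

Lemma ball_subset m n x : (m <= n)%N -> ball e m x \subset ball e n x.
Proof.
move=> /subnK <-; elim: (n - m)%N => [|d IH] //=.
exact: subset_trans IH (subsetUl _ _).
Qed.

Lemma last_path_ball p x0 n x : path e x0 p -> x0 \in ball e n x ->
  last x0 p \in ball e (n + size p) x.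
Proof.
elim: p x0 n => [|y p IH] x0 n /=; first by rewrite addn0.
by move=> /andP [ex0y py] x0b; rewrite addnS -addSn; apply: IH (ball_step x0b ex0y).
Qed.

Lemma dist_leq_ball x y n : (n < #|T|)%N -> y \in ball e n x -> (dist e x y <= n)%N.
Proof.
move=> nT yb; rewrite /dist leqNgt; apply/negP => /(before_find 0%N).
by rewrite nth_iota // add0n yb.
Qed.

Lemma ball_dist x y : (dist e x y < #|T|)%N -> y \in ball e (dist e x y) x.
Proof.
move=> dT; have := dT; rewrite -[X in (_ < X)%N](size_iota 0) -has_find.
by move/(nth_find 0%N); rewrite nth_iota.
Qed.

Lemma ball_lt_dist x y m : (m < dist e x y)%N -> y \notin ball e m x.
Proof.
move=> mdxy; have mT : (m < #|T|)%N.
  apply: leq_trans mdxy _; rewrite -[X in (_ <= X)%N](size_iota 0).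
  exact: find_size.
by have := before_find 0%N mdxy; rewrite nth_iota // add0n => ->.
Qed.

Lemma dist_lt_card x y : connect e x y -> (dist e x y < #|T|)%N.
Proof.
case/connectP => p /shortenP [p' p'path uniq_p' _] -> {p}.
have p'T : (size p' < #|T|)%N.
  by rewrite -ltnS -/(size (x :: p')) -(card_uniqP uniq_p') ltnS max_card.
apply: leq_ltn_trans (p'T); apply: dist_leq_ball p'T _.
by rewrite -[size p']add0n; apply: last_path_ball; rewrite ?inE.
Qed.

Hypothesis e_sym : symmetric e.

Lemma dist_pred_neighbor x y n : connect e x y -> dist e x y = n.+1 ->
  exists2 z, e y z & dist e x z = n.
Proof.
move=> cxy dxy; have dT := dist_lt_card cxy.
have y_notin : y \notin ball e n x by apply: ball_lt_dist; rewrite dxy.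
have := ball_dist dT; rewrite dxy /= in_setU inE (negbTE y_notin) /=.
case/existsP => z /andP [zb ezy]; exists z; first by rewrite e_sym.
have nT : (n < #|T|)%N by rewrite -ltnS -dxy ltnW.
apply/eqP; rewrite eqn_leq dist_leq_ball //= leqNgt; apply/negP => dxz_lt.
have zT : (dist e x z < #|T|)%N by apply: ltn_trans nT.
have := subsetP (ball_subset x dxz_lt) _ (ball_step (ball_dist zT) ezy).
by rewrite (negbTE y_notin).
Qed.

Hypothesis e_connected : forall x y, connect e x y.

Lemma dist_attained x y n : (n <= dist e x y)%N -> exists w, dist e x w = n.
Proof.
move dxy: (dist e x y) => k; elim: k y dxy => [|k IH] y dxy.
  by rewrite leqn0 => /eqP ->; exists y.
rewrite leq_eqVlt ltnS => /predU1P [->|nk]; first by exists y.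
have [z _ dxz] := dist_pred_neighbor (e_connected x y) dxy.
exact: IH dxz nk.
Qed.

End Distance.

Lemma drg_c_gt0 (T : finType) (e : rel T) (D : nat) (a b c : nat -> nat) :
  distance_regular e D a b c -> forall j, (0 < j <= D)%N -> (0 < c j)%N.
Proof.
case=> [[e_sym _] conn _ [x [y dxy]] reg] [//|j] /andP [_ jD].
have [w dxw] : exists w, dist e x w = j.+1.
  by apply: (dist_attained e_sym conn (y := y)); rewrite dxy.
have [z ewz dxz] := dist_pred_neighbor e_sym (conn x w) dxw.
have := reg x w; rewrite /= dxw => -[-> _ _].
by rewrite card_gt0; apply/set0Pn; exists z; rewrite inE ewz dxz /=.
Qed.

Local Open Scope ring_scope.

Definition casoratian (R : pzRingType) (sigma rho : nat -> R) (i : nat) : R :=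
  sigma i.+1 * rho i - sigma i * rho i.+1.

Section PseudoCosineSums.
Variables (R : realFieldType) (D : nat) (a b c : nat -> nat).
Variables (theta theta' : R) (sigma rho : nat -> R).
Hypothesis sigma_cos : pseudo_cosine_seq D a b c theta sigma.
Hypothesis rho_cos : pseudo_cosine_seq D a b c theta' rho.

Lemma pseudo_cosine_theta_sub : (0 < D)%N ->
  theta - theta' = (b 0%N)%:R * (sigma 1%N - rho 1%N).
Proof.
case: sigma_cos rho_cos => [s0 s_rec] [r0 r_rec] D_gt0.
rewrite -(mulr1 theta) -(mulr1 theta') -{1}s0 -r0.
rewrite -s_rec // -r_rec //= s0 r0; ring.
Qed.

Lemma casoratian_rec i : (i.+1 < D)%N ->
  (b i.+1)%:R * casoratian sigma rho i.+1
  = (c i.+1)%:R * casoratian sigma rho i + (theta - theta') * sigma i.+1 * rho i.+1.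
Proof.
case: sigma_cos rho_cos => [_ s_rec] [_ r_rec] iD.
have := s_rec i.+1 iD; have := r_rec i.+1 iD; rewrite /casoratian /= => r_eq s_eq.
have -> : (theta - theta') * sigma i.+1 * rho i.+1
  = rho i.+1 * (theta * sigma i.+1) - sigma i.+1 * (theta' * rho i.+1) by ring.
rewrite -s_eq -r_eq; ring.
Qed.

Lemma pseudo_cosine_sum_kh i : (i < D)%N ->
  (forall j, (0 < j <= i)%N -> (c j)%:R != 0 :> R) ->
  (sigma 1%N - rho 1%N) * (\sum_(0 <= h < i.+1) kh R b c h * sigma h * rho h)
  = (\prod_(1 <= j < i.+1) (b j)%:R) / (\prod_(1 <= j < i.+1) (c j)%:R)
    * casoratian sigma rho i.
Proof.
case: sigma_cos rho_cos => [s0 _] [r0 _].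
elim: i => [|i IH] iD c_neq0.
  by rewrite big_nat1 /kh /casoratian !big_geq // s0 r0 !divr1 !mulr1 !mul1r.
have c_succ : (c i.+1)%:R != 0 :> R by apply: c_neq0; rewrite ltn0Sn leqnn.
have c_neq0_le_i j : (0 < j <= i)%N -> (c j)%:R != 0 :> R.
  by case/andP => j_gt0 ji; apply: c_neq0; rewrite j_gt0 ltnW.
rewrite big_nat_recr //= mulrDr (IH (ltnW iD) c_neq0_le_i).
set B := \prod_(1 <= j < i.+1) (b j)%:R : R.
set C := \prod_(1 <= j < i.+1) (c j)%:R : R.
have C_neq0 : C != 0.
  rewrite prodf_seq_neq0; apply/allP => j; rewrite mem_index_iota => ji.
  by apply/implyP => _; apply: c_neq0_le_i.
have kh_succ : kh R b c i.+1 = (b 0%N)%:R * B / (C * (c i.+1)%:R).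
  by rewrite /kh [X in X / _]big_ltn // [X in _ / X]big_nat_recr.
rewrite kh_succ [\prod_(1 <= j < i.+2) (b j)%:R]big_nat_recr //.
rewrite [\prod_(1 <= j < i.+2) (c j)%:R]big_nat_recr //= -/B -/C.
have -> : B * (b i.+1)%:R / (C * (c i.+1)%:R) * casoratian sigma rho i.+1
  = B / (C * (c i.+1)%:R) * ((b i.+1)%:R * casoratian sigma rho i.+1) by ring.
rewrite casoratian_rec // pseudo_cosine_theta_sub //; last exact: leq_ltn_trans iD.
by clearbody B C; field; rewrite C_neq0 c_succ.
Qed.

End PseudoCosineSums.

Theorem lemma3p2 (R : realFieldType) (T : finType) (e : rel T) (D : nat)
    (a b c : nat -> nat) (sigma rho : nat -> R) :
  distance_regular e D a b c -> (3 <= D)%N ->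
  is_pseudo_cosine_seq D a b c sigma ->
  is_pseudo_cosine_seq D a b c rho ->
  forall i : nat, (i <= D.-1)%N ->
    (sigma 1%N - rho 1%N) * (\sum_(0 <= h < i.+1) kh R b c h * sigma h * rho h)
    = (\prod_(1 <= j < i.+1) (b j)%:R) / (\prod_(1 <= j < i.+1) (c j)%:R)
      * (sigma i.+1 * rho i - sigma i * rho i.+1).
Proof.
move=> drg D_ge3 [theta sigma_cos] [theta' rho_cos] i iD.
have {}iD : (i < D)%N.
  by apply: leq_ltn_trans iD _; rewrite ltn_predL (leq_trans _ D_ge3).
apply: (pseudo_cosine_sum_kh sigma_cos rho_cos iD) => j /andP [j_gt0 ji].
rewrite pnatr_eq0 -lt0n (drg_c_gt0 drg) // j_gt0.
exact: leq_trans ji (ltnW iD).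
Qed.
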